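(* If $q$ is a well-formed PIFO tree, then $\mathsf{flush}(q)$ is an interleaving of the lists in $\mathsf{snap}(q)$.
   Context: Fix a set $\mathsf{Pkt}$ of packets and a totally ordered set $\mathsf{Rk}$ of ranks (smaller is more favorable). PIFOs: for a set $S$, a PIFO over $S$ is a finite sequence of pairs $(s,r)\in S\times\mathsf{Rk}$ in insertion order; $\mathsf{PIFO}(S)$ is the set of these. $\mathsf{pop}_{\mathsf{PIFO}}(p)$ is undefined if $p$ is empty; otherwise it removes the entry of minimal rank (earliest-inserted among ties) and returns $(s,p')$, its element and the rest. $|p|$ is the number of entries, $|p|_s$ the number with element $s$. Topologies: $\mathsf{Topo}$ is the smallest set with $*\in\mathsf{Topo}$ and $\mathsf{Node}(\vec t)\in\mathsf{Topo}$ for $n\in\mathbb{N}$, $\vec t\in\mathsf{Topo}^n$. PIFO trees: $\mathsf{Leaf}(p)\in\mathsf{PIFOTree}( * )$ for $p\in\mathsf{PIFO}(\mathsf{Pkt})$; $\mathsf{Internal}(\vec q,p)\in\mathsf{PIFOTree}(\mathsf{Node}(\vec t))$ whenever $\vec t\in\mathsf{Topo}^n$, $p\in\mathsf{PIFO}(\{1,\dots,n\})$, $\vec q[i]\in\mathsf{PIFOTree}(\vec t[i])$. $\vec q[q'/i]$ replaces the $i$-th entry by $q'$. pop (partial): $\mathsf{pop}(\mathsf{Leaf}(p))=(pkt,\mathsf{Leaf}(p'))$ if $\mathsf{pop}_{\mathsf{PIFO}}(p)=(pkt,p')$; $\mathsf{pop}(\mathsf{Internal}(\vec q,p))=(pkt,\mathsf{Internal}(\vec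 q[q'/i],p'))$ if $\mathsf{pop}_{\mathsf{PIFO}}(p)=(i,p')$ and $\mathsf{pop}(\vec q[i])=(pkt,q')$; undefined otherwise. Size: $|\mathsf{Leaf}(p)|=|p|$, $|\mathsf{Internal}(\vec q,p)|=\sum_i|\vec q[i]|$. Well-formedness: $\vdash\mathsf{Leaf}(p)$ always; $\vdash\mathsf{Internal}(\vec q,p)$ iff for all $i$, $\vdash\vec q[i]$ and $|p|_i=|\vec q[i]|$. Words: finite sequences are written by juxtaposition, $\epsilon$ is the empty word, $\cdot$ concatenation. For a PIFO $p$, $\textsc{flush}(p)$ is the word of elements obtained by repeatedly applying $\mathsf{pop}_{\mathsf{PIFO}}$ until $p$ is empty, with the last popped element leftmost. Snapshot (a list of words): $\mathsf{snap}(\mathsf{Leaf}(p)) = [\textsc{flush}(p)]$ and $\mathsf{snap}(\mathsf{Internal}(\vec q,p)) = \mathsf{snap}(\vec q[1]) +\!\!+ \cdots +\!\!+ \mathsf{snap}(\vec q[n])$, where $[x]$ is the one-element list and $+\!\!+$ list concatenation. For a well-formed $q$, $\mathsf{flush}(q)$ is defined by induction on $|q|$: $\mathsf{flush}(q)=\epsilon$ if $|q|=0$, and $\mathsf{flush}(q)=\mathsf{flush}(q')\cdot pkt$ if $|q|>0$ and $\mathsf{pop}(q)=(pkt,q')$. A word $w$ is an interleaving of words $w_1,\dots,w_k$ if the positions of $w$ can be partitioned into $k$ sets such that, for each $j$, the letters of $w$ at the $j$-th set, read in order, form $w_j$. *)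

From mathcomp Require Import all_boot all_order.
Set Implicit Arguments. Unset Strict Implicit. Unset Printing Implicit Defensive.
Import Order.TTheory.
Local Open Scope order_scope.

Inductive topo : Type := Star | Node of seq topo.

Section PIFOTrees.
Variables (Pkt : Type) (d : Order.disp_t) (Rk : orderType d).

(* A PIFO over S: entries (element, rank) in insertion order (head = earliest). *)
Definition pifo (S : Type) := seq (S * Rk).

Fixpoint pop_entry (S : Type) (p : pifo S) : option ((S * Rk) * pifo S) :=
  match p with
  | [::] => None
  | x :: p0 =>
      match pop_entry p0 with
      | None => Some (x, [::])
      | Some (y, p') => if x.2 <= y.2 then Some (x, p0) else Some (y, x :: p')
      end
  end.

Definition pop_pifo (S : Type) (p : pifo S) : option (S * pifo S) :=
  omap (fun ep => (ep.1.1, ep.2)) (pop_entry p).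

Definition pcount (S : eqType) (p : pifo S) (s : S) : nat :=
  count (fun e => e.1 == s) p.

(* PIFO trees (untyped); the topology is imposed by [has_topo].
   Children are indexed 0 .. n-1 (the paper uses 1 .. n). *)
Inductive ptree : Type :=
  | Leaf of pifo Pkt
  | Internal of seq ptree & pifo nat.

Fixpoint has_topo (t : topo) (q : ptree) : bool :=
  match t, q with
  | Star, Leaf _ => true
  | Node ts, Internal qs p =>
      (size qs == size ts) && all (fun e => e.1 < size qs) p &&
      (fix chk (ts : seq topo) (qs : seq ptree) : bool :=
         match ts, qs with
         | [::], [::] => true
         | t1 :: ts', q1 :: qs' => has_topo t1 q1 && chk ts' qs'
         | _, _ => false
         end) ts qs
  | _, _ => false
  end.

Definition is_pifotree (t : topo) (q : ptree) : Prop := has_topo t q.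

Fixpoint pop (q : ptree) : option (Pkt * ptree) :=
  match q with
  | Leaf p =>
      match pop_pifo p with
      | Some (pkt, p') => Some (pkt, Leaf p')
      | None => None
      end
  | Internal qs p =>
      match pop_pifo p with
      | Some (i, p') =>
          match (fix pop_at (qs : seq ptree) (i : nat) : option (Pkt * seq ptree) :=
                   match qs, i with
                   | [::], _ => None
                   | q1 :: qs', 0 =>
                       match pop q1 with
                       | Some (pkt, q1') => Some (pkt, q1' :: qs')
                       | None => None
                       end
                   | q1 :: qs', i'.+1 =>
                       match pop_at qs' i' with
                       | Some (pkt, qs'') => Some (pkt, q1 :: qs'')
                       | None => None
                       end
                   end) qs i with
          | Some (pkt, qs') => Some (pkt, Internal qs' p')
          | None => None
          end
      | None => None
      end
  end.

Fixpoint tsize (q : ptree) : nat :=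
  match q with
  | Leaf p => size p
  | Internal qs _ => sumn (map tsize qs)
  end.

Fixpoint wf (q : ptree) : bool :=
  match q with
  | Leaf _ => true
  | Internal qs p =>
      all wf qs &&
      all (fun i => pcount p i == tsize (nth (Leaf [::]) qs i)) (iota 0 (size qs))
  end.

(* flush of a PIFO: last popped element leftmost. Fuel = |p| suffices. *)
Fixpoint flushP_aux (S : Type) (n : nat) (p : pifo S) : seq S :=
  match n with
  | 0 => [::]
  | n'.+1 =>
      match pop_pifo p with
      | Some (s, p') => rcons (flushP_aux n' p') s
      | None => [::]
      end
  end.
Definition flushP (S : Type) (p : pifo S) : seq S := flushP_aux (size p) p.

Fixpoint snap (q : ptree) : seq (seq Pkt) :=
  match q with
  | Leaf p => [:: flushP p]
  | Internal qs _ => flatten (map snap qs)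
  end.

Fixpoint flush_aux (n : nat) (q : ptree) : seq Pkt :=
  match n with
  | 0 => [::]
  | n'.+1 =>
      if tsize q == 0 then [::] else
      match pop q with
      | Some (pkt, q') => rcons (flush_aux n' q') pkt
      | None => [::]
      end
  end.
Definition flush (q : ptree) : seq Pkt := flush_aux (tsize q) q.

End PIFOTrees.

(* w is an interleaving of ws = [w_1; ...; w_k]: positions of w are labelled
   by the part (0 .. k-1) they belong to, and reading each part in order
   gives the corresponding word. *)
Definition interleaving (A : Type) (w : seq A) (ws : seq (seq A)) : Prop :=
  exists lab : seq nat,
    [/\ size lab = size w,
        all (fun j => j < size ws) lab
      & forall j, j < size ws ->
          [seq x.1 | x <- zip w lab & x.2 == j] = nth [::] ws j].

From Pilot Require Import Defs.
From mathcomp Require Import all_boot all_order.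
From mathcomp Require Import zify.
Set Implicit Arguments. Unset Strict Implicit. Unset Printing Implicit Defensive.

(* Popping a nonempty tree q returns a packet pkt and a tree q' of size one
   less, and the only change to the snapshot is that one of its words loses
   its last letter, namely pkt.  Since flush(q) = flush(q') pkt, an
   interleaving of snap(q') extends to one of snap(q) by labelling the new
   last position with the index of that word; induction on the size of q
   concludes.  For pop to be defined on every nonempty tree, and for this to
   persist along the induction, we need well-formedness together with the
   fact, guaranteed by the topology, that the PIFO of each internal node only
   names existing children; pop preserves both. *)

Lemma sumn_gt0 (s : seq nat) : (0 < sumn s) = has (fun n => 0 < n) s.
Proof. by elim: s => //= n s <-; rewrite addn_gt0. Qed.

Lemma nth_cat_cons_neq (T : Type) (x0 x y : T) s1 s2 k : k != size s1 ->
  nth x0 (s1 ++ x :: s2) k = nth x0 (s1 ++ y :: s2) k.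
Proof. by move=> nk; rewrite !nth_cat; case: ltnP => // ?; case E: (k - _) => //; lia. Qed.

Lemma nth_cat_cons (T : Type) (x0 x : T) s1 s2 : nth x0 (s1 ++ x :: s2) (size s1) = x.
Proof. by rewrite nth_cat ltnn subnn. Qed.

Lemma interleaving_nil (A : Type) (ws : seq (seq A)) :
  all (@nilp A) ws -> interleaving [::] ws.
Proof.
move=> Hws; exists [::]; split=> // j Hj.
by have /nilP -> := all_nthP [::] Hws j Hj.
Qed.

Lemma interleaving_rcons (A : Type) (w w0 : seq A) x As Bs :
  interleaving w (As ++ w0 :: Bs) ->
  interleaving (rcons w x) (As ++ rcons w0 x :: Bs).
Proof.
case=> lab [Hsize Hlab Hparts].
have Hws : size (As ++ rcons w0 x :: Bs) = size (As ++ w0 :: Bs) by rewrite !size_cat.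
exists (rcons lab (size As)); rewrite Hws; split.
- by rewrite !size_rcons Hsize.
- by rewrite all_rcons Hlab andbT size_cat ltEnat /= -addSnnS leq_addr.
move=> j Hj; rewrite zip_rcons ?Hsize // filter_rcons /=.
case: (eqVneq (size As) j) => [Ej|nj].
  by subst j; rewrite map_rcons (Hparts _ Hj) !nth_cat_cons.
by rewrite (Hparts _ Hj) (nth_cat_cons_neq _ _ (rcons w0 x)) // eq_sym.
Qed.

Section Pifo.
Variables (d : Order.disp_t) (Rk : orderType d) (S : Type).
Implicit Types (p : pifo Rk S).

Lemma pop_entry_None p : pop_entry p = None -> p = [::].
Proof. by case: p => //= x p; case: (pop_entry p) => [[y p0]|] //; case: ifP. Qed.

Lemma pop_entry_split p e p' : pop_entry p = Some (e, p') ->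
  exists p1 p2, p = p1 ++ e :: p2 /\ p' = p1 ++ p2.
Proof.
elim: p e p' => [|x p IHp] e p' //=.
case E: (pop_entry p) => [[y p0]|]; last first.
  by case=> <- <-; exists [::], [::]; rewrite (pop_entry_None E).
case: ifP => _ [<- <-]; first by exists [::], p.
by have [p1 [p2 [-> ->]]] := IHp _ _ E; exists (x :: p1), p2.
Qed.

Lemma pop_pifo_None p : pop_pifo p = None -> p = [::].
Proof. by rewrite /pop_pifo; case E: (pop_entry p) => //; rewrite (pop_entry_None E). Qed.

Lemma pop_pifo_split p s p' : pop_pifo p = Some (s, p') ->
  exists r p1 p2, p = p1 ++ (s, r) :: p2 /\ p' = p1 ++ p2.
Proof.
rewrite /pop_pifo; case E: (pop_entry p) => [[[s0 r] p0]|] //= [<- <-].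
by exists r; apply: pop_entry_split.
Qed.

Lemma count_pop_pifo (a : pred (S * Rk)) p s p' : pop_pifo p = Some (s, p') ->
  exists r, count a p = a (s, r) + count a p'.
Proof.
case/pop_pifo_split=> r [p1 [p2 [-> ->]]]; exists r.
by rewrite !count_cat /= addnCA.
Qed.

Lemma all_pop_pifo (a : pred S) p s p' : pop_pifo p = Some (s, p') ->
  all (fun e => a e.1) p = a s && all (fun e => a e.1) p'.
Proof.
case/pop_pifo_split=> r [p1 [p2 [-> ->]]].
by rewrite !all_cat /=; case: (a s); rewrite ?andbF.
Qed.

Lemma size_pop_pifo p s p' : pop_pifo p = Some (s, p') -> size p = (size p').+1.
Proof. by case/(count_pop_pifo predT)=> r; rewrite !count_predT. Qed.

Lemma flushP_pop p s p' : pop_pifo p = Some (s, p') -> flushP p = rcons (flushP p') s.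
Proof. by move=> E; rewrite /flushP (size_pop_pifo E) /= E. Qed.

End Pifo.

Lemma pcount_pop_pifo d (Rk : orderType d) (S : eqType) (p p' : pifo Rk S) s k :
  pop_pifo p = Some (s, p') -> pcount p k = (s == k) + pcount p' k.
Proof. by case/(count_pop_pifo (fun e => e.1 == k))=> r. Qed.

Section PifoTrees.
Variables (Pkt : Type) (d : Order.disp_t) (Rk : orderType d).
Local Notation tree := (ptree Pkt Rk).
Local Notation tsize := (@Defs.tsize Pkt d Rk).
Local Notation pop := (@Defs.pop Pkt d Rk).
Local Notation snap := (@Defs.snap Pkt d Rk).
Local Notation leaf0 := (Leaf [::] : tree).
Implicit Types (q : tree) (qs : seq tree).

(* Out of range, [nth] returns a leaf, so the induction hypothesis may be
   stated for every index. *)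
Lemma ptree_nth_ind (P : tree -> Prop) :
  (forall p, P (Leaf p)) ->
  (forall qs p, (forall k, P (nth leaf0 qs k)) -> P (Internal qs p)) ->
  forall q, P q.
Proof.
move=> HL HI; fix IH 1; case=> [p|qs p]; first exact: HL.
apply: HI; move: qs {p}; fix IHqs 1; case=> [|q1 qs] [|k] /=.
- exact: HL.
- exact: HL.
- exact: IH.
- exact: IHqs.
Qed.

(* A copy of the fixpoint local to [pop], so that [pop_Internal] holds by
   conversion. *)
Definition pop_at (f : tree -> option (Pkt * tree)) :=
  fix pop_at qs i {struct qs} : option (Pkt * seq tree) :=
  match qs, i with
  | [::], _ => None
  | q1 :: qs', 0 =>
      match f q1 with
      | Some (pkt, q1') => Some (pkt, q1' :: qs')
      | None => None
      end
  | q1 :: qs', i'.+1 =>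
      match pop_at qs' i' with
      | Some (pkt, qs'') => Some (pkt, q1 :: qs'')
      | None => None
      end
  end.

Lemma pop_Internal qs p : pop (Internal qs p) =
  match pop_pifo p with
  | Some (i, p') =>
     match pop_at pop qs i with
     | Some (pkt, qs') => Some (pkt, Internal qs' p')
     | None => None
     end
  | None => None
  end.
Proof. by []. Qed.

Lemma pop_at_cat f qs1 q qs2 :
  pop_at f (qs1 ++ q :: qs2) (size qs1) =
  omap (fun r => (r.1, qs1 ++ r.2 :: qs2)) (f q).
Proof.
elim: qs1 => [|q1 qs1 IH] /=; first by case: (f q) => [[]|].
by rewrite IH; case: (f q) => [[]|].
Qed.

Lemma pop_at_Some f qs i pkt qs' : pop_at f qs i = Some (pkt, qs') ->
  exists qs1 qi qs2 qi', [/\ qs = qs1 ++ qi :: qs2, qs' = qs1 ++ qi' :: qs2,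
     size qs1 = i & f qi = Some (pkt, qi')].
Proof.
elim: qs i qs' => [|q1 qs IH] [|i] qs' //=.
  by case E: (f q1) => [[pk q1']|] // [<- <-]; exists [::], q1, qs, q1'.
case E: (pop_at f qs i) => [[pk qs'']|] // [Epk <-]; subst pk.
have [qs1 [qi [qs2 [qi' [-> -> <- H]]]]] := IH _ _ E.
by exists (q1 :: qs1), qi, qs2, qi'.
Qed.

Lemma pop_InternalP qs p pkt q' : pop (Internal qs p) = Some (pkt, q') ->
  exists qs1 qi qs2 qi' p', [/\ qs = qs1 ++ qi :: qs2,
     q' = Internal (qs1 ++ qi' :: qs2) p', pop_pifo p = Some (size qs1, p')
   & pop qi = Some (pkt, qi')].
Proof.
rewrite pop_Internal; case Ep: (pop_pifo p) => [[i p']|] //.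
case Ea: (pop_at pop qs i) => [[pk qs']|] // [Epk <-]; subst pk.
have [qs1 [qi [qs2 [qi' [-> -> Hi Hq]]]]] := pop_at_Some Ea.
by exists qs1, qi, qs2, qi', p'; rewrite Hi.
Qed.

Lemma pop_Internal_cat qs1 qi qs2 p p' pkt qi' :
  pop_pifo p = Some (size qs1, p') -> pop qi = Some (pkt, qi') ->
  pop (Internal (qs1 ++ qi :: qs2) p) = Some (pkt, Internal (qs1 ++ qi' :: qs2) p').
Proof. by move=> Ep Eq; rewrite pop_Internal Ep pop_at_cat Eq. Qed.

Lemma tsize_pop q pkt q' : pop q = Some (pkt, q') -> tsize q = (tsize q').+1.
Proof.
elim/ptree_nth_ind: q q' => [p|qs p IH] q' /=.
  by case E: (pop_pifo p) => [[s p']|] // [_ <-]; apply: size_pop_pifo E.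
case/pop_InternalP=> qs1 [qi [qs2 [qi' [p' [Eqs -> _ Hqi]]]]].
have := IH (size qs1); rewrite Eqs nth_cat_cons => /(_ _ Hqi) Hsz.
by rewrite /= !map_cat !sumn_cat /= Hsz addnS.
Qed.

Lemma snap_pop q pkt q' : pop q = Some (pkt, q') ->
  exists As Bs w, snap q = As ++ rcons w pkt :: Bs /\ snap q' = As ++ w :: Bs.
Proof.
elim/ptree_nth_ind: q q' => [p|qs p IH] q' /=.
  case E: (pop_pifo p) => [[s p']|] // [<- <-].
  by exists [::], [::], (flushP p'); rewrite (flushP_pop E).
case/pop_InternalP=> qs1 [qi [qs2 [qi' [p' [Eqs -> _ Hqi]]]]].
have := IH (size qs1); rewrite Eqs nth_cat_cons => /(_ _ Hqi) [As [Bs [w [Eq Eq']]]].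
exists (flatten (map snap qs1) ++ As), (Bs ++ flatten (map snap qs2)), w.
by rewrite /= !map_cat !flatten_cat /= Eq Eq' -!catA.
Qed.

Lemma snap_tsize0 q : tsize q = 0 -> all (@nilp Pkt) (snap q).
Proof.
elim/ptree_nth_ind: q => [p|qs p IH] /=; first by case: p.
elim: qs IH => [|q1 qs IHqs] IH //=.
rewrite all_cat => /eqP; rewrite addn_eq0 => /andP [/eqP H1 /eqP H2].
by rewrite (IH 0) // IHqs // => k; apply: (IH k.+1).
Qed.

Fixpoint indexed q : bool :=
  match q with
  | Leaf _ => true
  | Internal qs p => all (fun e => e.1 < size qs) p && all indexed qs
  end.

Lemma has_topo_Internal ts qs p : has_topo (Node ts) (Internal qs p) ->
  all (fun e => e.1 < size qs) p /\
  forall k, has_topo (nth Star ts k) (nth leaf0 qs k).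
Proof.
rewrite /= => /andP [/andP [_ Hp] Hts]; split => //.
elim: ts qs {p Hp} Hts => [|t1 ts IH] [|q1 qs] //=.
- by move=> _ k; rewrite !nth_nil.
- by case/andP=> H1 H2 [|k] //=; apply: IH.
Qed.

Lemma has_topo_indexed t q : has_topo t q -> indexed q.
Proof.
elim/ptree_nth_ind: q t => [p|qs p IH] [|ts] //.
case/has_topo_Internal=> /= -> Hts.
by apply/(all_nthP leaf0) => k _; apply: IH (Hts k).
Qed.

Lemma indexed_pop q pkt q' : indexed q -> pop q = Some (pkt, q') -> indexed q'.
Proof.
elim/ptree_nth_ind: q q' => [p|qs p IH] q' /=.
  by case: (pop_pifo p) => [[s p']|] // _ [_ <-].
move=> /andP [Hp Hqs] /pop_InternalP [qs1 [qi [qs2 [qi' [p' [Eqs -> Ep Hqi]]]]]].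
have Hsize : size (qs1 ++ qi' :: qs2) = size qs by rewrite Eqs !size_cat.
rewrite /= Hsize; apply/andP; split.
  by move: Hp; rewrite (all_pop_pifo (fun i => i < size qs) Ep) => /andP [].
move: Hqs (IH (size qs1)); rewrite Eqs nth_cat_cons !all_cat /=.
by case/and3P=> -> Hi -> /(_ _ Hi Hqi) ->.
Qed.

Lemma wf_pop q pkt q' : wf q -> pop q = Some (pkt, q') -> wf q'.
Proof.
elim/ptree_nth_ind: q q' => [p|qs p IH] q' /=.
  by case: (pop_pifo p) => [[s p']|] // _ [_ <-].
move=> /andP [Hwf Hcnt] /pop_InternalP [qs1 [qi [qs2 [qi' [p' [Eqs -> Ep Hqi]]]]]].
have Hsize : size (qs1 ++ qi' :: qs2) = size qs by rewrite Eqs !size_cat.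
have Hnth k : tsize (nth leaf0 qs k) =
              (size qs1 == k) + tsize (nth leaf0 (qs1 ++ qi' :: qs2) k).
  rewrite Eqs; case: (eqVneq (size qs1) k) => [<-|nk].
    by rewrite !nth_cat_cons (tsize_pop Hqi).
  by rewrite (nth_cat_cons_neq _ _ qi') // eq_sym.
rewrite /= Hsize; apply/andP; split.
  move: Hwf (IH (size qs1)); rewrite Eqs nth_cat_cons !all_cat /=.
  by case/and3P=> -> Hi -> /(_ _ Hi Hqi) ->.
apply/allP=> k Hk; have /eqP := allP Hcnt k Hk.
by rewrite (pcount_pop_pifo _ Ep) Hnth => /addnI ->.
Qed.

Lemma pop_total q : indexed q -> wf q -> 0 < tsize q ->
  exists pkt q', pop q = Some (pkt, q').
Proof.
elim/ptree_nth_ind: q => [p|qs p IH].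
  move=> _ _ /= Hp; case E: (pop_pifo p) => [[s p']|]; first by exists s, (Leaf p').
  by rewrite (pop_pifo_None E) in Hp.
move=> /andP [Hp Hidx] /andP [Hwf Hcnt].
rewrite [tsize _]/= sumn_gt0 has_map => /(has_nthP leaf0) [k Hk Hk0].
have Hcount j : j < size qs -> pcount p j = tsize (nth leaf0 qs j).
  by move=> Hj; apply/eqP/(allP Hcnt); rewrite mem_iota.
case Ep: (pop_pifo p) => [[i p']|]; last first.
  by move: Hk0; rewrite /= -Hcount // (pop_pifo_None Ep).
have Hi : i < size qs.
  by move: Hp; rewrite (all_pop_pifo (fun j => j < size qs) Ep) => /andP [].
have Hqi : 0 < tsize (nth leaf0 qs i) by rewrite -Hcount // (pcount_pop_pifo _ Ep) eqxx.
have [pkt [qi' Eqi]] := IH i (all_nthP leaf0 Hidx i Hi) (all_nthP leaf0 Hwf i Hi) Hqi.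
have Htake : size (take i qs) = i by rewrite size_takel // ltnW.
exists pkt, (Internal (take i qs ++ qi' :: drop i.+1 qs) p').
rewrite -{1}(cat_take_drop i qs) (drop_nth leaf0 Hi).
by apply: pop_Internal_cat; rewrite ?Htake.
Qed.

Lemma interleaving_flush_aux n q :
  indexed q -> wf q -> tsize q = n -> interleaving (flush_aux n q) (snap q).
Proof.
elim: n q => [|n IHn] q Hidx Hwf Hsz; first exact/interleaving_nil/snap_tsize0.
have [pkt [q' Hpop]] : exists pkt q', pop q = Some (pkt, q').
  by apply: pop_total Hidx Hwf _; rewrite Hsz.
have [As [Bs [w [-> Hq']]]] := snap_pop Hpop.
rewrite /= Hsz /= Hpop; apply: interleaving_rcons; rewrite -Hq'.
apply: IHn; [exact: indexed_pop Hpop | exact: wf_pop Hpop |].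
by move: Hsz; rewrite (tsize_pop Hpop) => -[].
Qed.

End PifoTrees.

Theorem lemma4p5 (Pkt : Type) (d : Order.disp_t) (Rk : orderType d)
  (t : topo) (q : ptree Pkt Rk) :
  is_pifotree t q -> wf q -> interleaving (flush q) (snap q).
Proof.
move=> Ht Hwf; apply: interleaving_flush_aux => //.
exact: has_topo_indexed Ht.
Qed.
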